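(* Let $\mathcal M$ be a finite polyptych lattice over $F$ and let $p\in \mathrm{Sp}(\mathcal M)$. Then $p$ is linear on every cone of $\Sigma(\mathcal M)$: for every $\mathcal C\in\Sigma(\mathcal M)$ and every $\alpha\in I$, the map $p\circ\pi_\alpha^{-1}$ restricted to $\pi_\alpha(\mathcal C)\cap M_\alpha$ is the restriction of an $F$-linear map $M_\alpha\to F$. Moreover, for every $F'$ with $F\subseteq F'\subseteq\mathbb R$, $p$ extends to a (continuous) function on $\mathcal M_{F'}$ which is $F'$-linear on each cone of $\Sigma(\mathcal M)$, and this extension lies in $\mathrm{Sp}_{F'}(\mathcal M)$.
   Context: Fix a subring $F$ with $\mathbb Z\subseteq F\subseteq\mathbb R$. A map $\psi:M\to M'$ between finite-rank free $F$-modules is piecewise $F$-linear if it is (the restriction of) a continuous map and there is a complete fan of $F$-rational polyhedral cones in $M\otimes_F\mathbb R$ such that $\psi|_{C\cap M}$ is $F$-linear for every cone $C$. A polyptych lattice of rank $r$ over $F$ is a collection $\{M_\alpha\}_{\alpha\in I}$ of free $F$-modules of rank $r$ with piecewise $F$-linear maps (mutations) $\mu_{\alpha,\beta}:M_\alpha\to M_\beta$ for all $\alpha,\beta\in I$ such that $\mu_{\alpha,\alpha}=\mathrm{id}$, $\mu_{\alpha,\beta}=\mu_{\beta,\alpha}^{-1}$ and $\mu_{\beta,\gamma}\circ\mu_{\alpha,\beta}=\mu_{\alpha,\gamma}$; it is finite if $I$ is finite. Its set of elements, also denoted $\mathcal M$, is $\bigsqcup_\alpha M_\alpha$ modulo $m_\alpha\sim\mu_{\alpha,\beta}(m_\alpha)$,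 and $\pi_\alpha:\mathcal M\to M_\alpha$ sends a class to its unique representative in $M_\alpha$. For $F\subseteq F'\subseteq \mathbb R$, $\mathcal M_{F'}$ is the polyptych lattice with charts $M_\alpha\otimes_FF'$ and the natural extensions of the mutations (in particular $\mathcal M_{\mathbb R}$). Write $m+_\alpha m':=\pi_\alpha^{-1}(\pi_\alpha(m)+\pi_\alpha(m'))$, and for $\lambda\in F_{\ge0}$, $\lambda m:=\pi_\alpha^{-1}(\lambda\pi_\alpha(m))$ (independent of $\alpha$). For finite $\mathcal M$, the PL fan $\Sigma(\mathcal M)$: fix $\alpha$, let $\Sigma(\mathcal M,\alpha)$ be the common refinement, over $\beta\in I$, of the minimal fans in $M_\alpha\otimes\mathbb R$ on whose cones $\mu_{\alpha,\beta}$ is linear; $\Sigma(\mathcal M)=\{\pi_\alpha^{-1}(C): C\in\Sigma(\mathcal M,\alpha)\}$ (independent of $\alpha$). A point of $\mathcal M$ is a function $p:\mathcal M\to F$ with $p(m)+p(m')=\min_{\alpha\in I}p(m+_\alpha m')$ for all $m,m'\in\mathcal M$ and $p(\lambda m)=\lambda p(m)$ for all $\lambda\in F_{\ge0}$; $\mathrm{Sp}(\mathcal M)$ is the set of points and $\mathrm{Sp}_{F'}(\mathcal M)$ the set of points of $\mathcal M_{F'}$. *)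

From HB Require Import structures.
From mathcomp Require Import all_boot all_order all_algebra.
From mathcomp Require Import reals.
From Stdlib Require List.
Set Implicit Arguments. Unset Strict Implicit. Unset Printing Implicit Defensive.
Import Order.TTheory GRing.Theory Num.Theory.
Local Open Scope ring_scope.

(* Charts: a free F-module of rank r is modelled as F^r, sitting inside
   M (x)_F R = R^r, here row vectors 'rV[R]_r. *)

Definition is_subring (R : realType) (F : R -> Prop) : Prop :=
  F 1 /\ (forall x y, F x -> F y -> F (x - y)) /\ (forall x y, F x -> F y -> F (x * y)).

Definition inFv (R : realType) (r : nat) (F : R -> Prop) (v : 'rV[R]_r) : Prop :=
  forall i, F (v 0 i).

Definition dotv (R : realType) (r : nat) (u x : 'rV[R]_r) : R :=
  \sum_(i < r) u 0 i * x 0 i.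

Definition cone_of (R : realType) (r : nat) (s : seq 'rV[R]_r) : 'rV[R]_r -> Prop :=
  fun x => forall u, u \in s -> 0 <= dotv u x.

Definition polycone (R : realType) (r : nat) (C : 'rV[R]_r -> Prop) : Prop :=
  exists s : seq 'rV[R]_r, forall x, C x <-> cone_of s x.

Definition Frational_cone (R : realType) (r : nat) (F : R -> Prop) (C : 'rV[R]_r -> Prop) : Prop :=
  exists s : seq 'rV[R]_r, (forall u, u \in s -> inFv F u) /\ (forall x, C x <-> cone_of s x).

Definition is_face (R : realType) (r : nat) (C D : 'rV[R]_r -> Prop) : Prop :=
  exists u : 'rV[R]_r, (forall x, C x -> 0 <= dotv u x) /\
    (forall x, D x <-> (C x /\ dotv u x = 0)).

Definition is_fan (R : realType) (r : nat) (Phi : seq ('rV[R]_r -> Prop)) : Prop :=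
  (forall C, List.In C Phi -> polycone C) /\
  (forall C D, List.In C Phi -> is_face C D ->
     exists2 D', List.In D' Phi & forall x, D x <-> D' x) /\
  (forall C D, List.In C Phi -> List.In D Phi ->
     is_face C (fun x => C x /\ D x) /\ is_face D (fun x => C x /\ D x)).

Definition complete_fan (R : realType) (r : nat) (Phi : seq ('rV[R]_r -> Prop)) : Prop :=
  is_fan Phi /\ (forall x, exists2 C, List.In C Phi & C x).

Definition lin_on (R : realType) (r : nat) (f : 'rV[R]_r -> 'rV[R]_r) (C : 'rV[R]_r -> Prop) : Prop :=
  exists B : 'M[R]_r, forall x, C x -> f x = x *m B.

Definition Flin_on (R : realType) (r : nat) (F : R -> Prop) (f : 'rV[R]_r -> 'rV[R]_r)
  (C : 'rV[R]_r -> Prop) : Prop :=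
  exists B : 'M[R]_r, (forall i j, F (B i j)) /\ (forall x, C x -> f x = x *m B).

Definition near_v (R : realType) (r : nat) (d : R) (x y : 'rV[R]_r) : Prop :=
  forall i, `|x 0 i - y 0 i| < d.

Definition contV (R : realType) (r : nat) (f : 'rV[R]_r -> 'rV[R]_r) : Prop :=
  forall x (e : R), 0 < e -> exists2 d : R, 0 < d &
    forall y, near_v d x y -> near_v e (f x) (f y).

Definition cont_on (R : realType) (r : nat) (S : 'rV[R]_r -> Prop) (g : 'rV[R]_r -> R) : Prop :=
  forall x, S x -> forall (e : R), 0 < e -> exists2 d : R, 0 < d &
    forall y, S y -> near_v d x y -> `|g x - g y| < e.

(* piecewise F-linear map (given by its real piecewise-linear extension) *)
Definition PL (R : realType) (r : nat) (F : R -> Prop) (f : 'rV[R]_r -> 'rV[R]_r) : Prop :=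
  contV f /\ exists Phi : seq ('rV[R]_r -> Prop),
    complete_fan Phi /\ (forall C, List.In C Phi -> Frational_cone F C /\ Flin_on F f C).

Definition is_polyptych (R : realType) (r : nat) (I : finType) (F : R -> Prop)
  (mu : I -> I -> 'rV[R]_r -> 'rV[R]_r) : Prop :=
  (forall a b, PL F (mu a b)) /\
  (forall a x, mu a a x = x) /\
  (forall a b x, mu b a (mu a b x) = x /\ mu a b (mu b a x) = x) /\
  (forall a b c x, mu b c (mu a b x) = mu a c x).

(* Elements of the polyptych lattice M_F: compatible families of representatives
   (one per chart), i.e. equivalence classes of the disjoint union. *)
Definition elems (R : realType) (r : nat) (I : finType) (F : R -> Prop)
  (mu : I -> I -> 'rV[R]_r -> 'rV[R]_r) (m : I -> 'rV[R]_r) : Prop :=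
  (forall a b, m b = mu a b (m a)) /\ (forall a, inFv F (m a)).

Definition pinv (R : realType) (r : nat) (I : finType)
  (mu : I -> I -> 'rV[R]_r -> 'rV[R]_r) (a : I) (v : 'rV[R]_r) : I -> 'rV[R]_r :=
  fun b => mu a b v.

Definition addA (R : realType) (r : nat) (I : finType)
  (mu : I -> I -> 'rV[R]_r -> 'rV[R]_r) (a : I) (m m' : I -> 'rV[R]_r) : I -> 'rV[R]_r :=
  pinv mu a (m a + m' a).

Definition scaleA (R : realType) (r : nat) (I : finType)
  (mu : I -> I -> 'rV[R]_r -> 'rV[R]_r) (a : I) (l : R) (m : I -> 'rV[R]_r) : I -> 'rV[R]_r :=
  pinv mu a (l *: m a).

(* p is a point of M_F (p in Sp_F(M)); p is a function on M_F with values in F.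
   p m + p m' = min_a p (m +_a m') is written out as "attained and a lower bound". *)
Definition is_point (R : realType) (r : nat) (I : finType) (F : R -> Prop)
  (mu : I -> I -> 'rV[R]_r -> 'rV[R]_r) (p : (I -> 'rV[R]_r) -> R) : Prop :=
  (forall m, elems F mu m -> F (p m)) /\
  (forall m m', elems F mu m -> elems F mu m' ->
     (exists a, p m + p m' = p (addA mu a m m')) /\
     (forall a, p m + p m' <= p (addA mu a m m'))) /\
  (forall (l : R) m a, F l -> 0 <= l -> elems F mu m -> p (scaleA mu a l m) = l * p m).

Definition min_lin_fan (R : realType) (r : nat) (f : 'rV[R]_r -> 'rV[R]_r)
  (Phi : seq ('rV[R]_r -> Prop)) : Prop :=
  complete_fan Phi /\ (forall C, List.In C Phi -> lin_on f C) /\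
  (forall Psi, complete_fan Psi -> (forall D, List.In D Psi -> lin_on f D) ->
     forall D, List.In D Psi -> exists2 C, List.In C Phi & forall x, D x -> C x).

(* C is a cone of Sigma(M, a): the common refinement over b of the minimal fans
   of linearity of mu_{a,b}, i.e. an intersection of one cone from each. *)
Definition SigmaA (R : realType) (r : nat) (I : finType)
  (mu : I -> I -> 'rV[R]_r -> 'rV[R]_r) (a : I) (C : 'rV[R]_r -> Prop) : Prop :=
  exists (Phi : I -> seq ('rV[R]_r -> Prop)) (D : I -> 'rV[R]_r -> Prop),
    (forall b, min_lin_fan (mu a b) (Phi b)) /\
    (forall b, List.In (D b) (Phi b)) /\
    (forall x, C x <-> forall b, D b x).

(* the function q (on M_{F'}) is F'-linear on the cone pi_{a0}^{-1}(C0) of Sigma(M),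
   read in chart a: q o pi_a^{-1} agrees on pi_a(pi_{a0}^{-1} C0) cap F'^r
   with an F'-linear functional F'^r -> F'. *)
Definition lin_on_cone (R : realType) (r : nat) (I : finType) (F' : R -> Prop)
  (mu : I -> I -> 'rV[R]_r -> 'rV[R]_r) (q : (I -> 'rV[R]_r) -> R)
  (a0 : I) (C0 : 'rV[R]_r -> Prop) (a : I) : Prop :=
  exists c : 'rV[R]_r, inFv F' c /\
    forall v, (exists2 x, C0 x & v = mu a0 a x) -> inFv F' v ->
      q (pinv mu a v) = dotv c v.

(* In a chart [a], a point [p] becomes a function [chartp a] on [F^r] that is
   superadditive and positively homogeneous, and additive on any two vectors on
   which all mutations out of [a] are additive, because the minimum in the
   definition of a point is then the value at the sum.  A cone of Sigma(M) lies in
   a full-dimensional cone on which all mutations are linear: near a relative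
   interior point one cone of each linearity fan contains a ball, and the face
   property of the fan makes it contain the whole Sigma-cone.  On a
   full-dimensional cone an additive homogeneous function is linear.
   For the extension, superadditivity and homogeneity bound [chartp z] below by
   [-K |v|_1], so it is [K]-Lipschitz on the dense set of points [w / N]; its
   McShane extension is continuous, agrees with the linear functionals on the
   cones, and inherits the tropical identity of a point by density. *)

From Pilot Require Import Defs.
From HB Require Import structures.
From mathcomp Require Import all_boot all_order all_algebra.
From mathcomp Require Import reals.
From mathcomp Require Import ring lra.
From Stdlib Require Import Classical FunctionalExtensionality IndefiniteDescription.
From Stdlib Require List.
Import Order.TTheory GRing.Theory Num.Theory.
Local Open Scope ring_scope.
Set Implicit Arguments. Unset Strict Implicit. Unset Printing Implicit Defensive.

Lemma In_of_mem (T : eqType) (x : T) (s : seq T) : x \in s -> List.In x s.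
Proof. elim: s => //= y s IH; rewrite inE => /orP [/eqP ->|h]; [by left|right; exact: IH]. Qed.

Section Radius.
Variable R : realType.

Lemma common_radius (T : Type) (s : list T) (P : T -> R -> Prop) :
  (forall t d d', 0 < d' -> d' <= d -> P t d -> P t d') ->
  (forall t, List.In t s -> exists2 d, 0 < d & P t d) ->
  exists2 d, 0 < d & forall t, List.In t s -> P t d.
Proof.
move=> mono; elim: s => [|t s IH] H; first by exists 1.
have [d1 d1p Pd1] := H t (or_introl erefl).
have [d2 d2p Pd2] := IH (fun t' h => H t' (or_intror h)).
have d12p : 0 < Num.min d1 d2 by rewrite lt_min d1p d2p.
exists (Num.min d1 d2) => // t' [<-|h].
  by apply: (mono _ d1) => //; rewrite ge_min lexx.
by apply: (mono _ d2); rewrite ?ge_min ?lexx ?orbT //; apply: Pd2.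
Qed.

Lemma common_radius_fin (T : finType) (P : T -> R -> Prop) :
  (forall t d d', 0 < d' -> d' <= d -> P t d -> P t d') ->
  (forall t, exists2 d, 0 < d & P t d) ->
  exists2 d, 0 < d & forall t, P t d.
Proof.
move=> mono H; have [d dp Hd] := common_radius (s := enum T) mono (fun t _ => H t).
by exists d => // t; apply/Hd/In_of_mem; rewrite mem_enum.
Qed.

End Radius.

Section Norm.
Variables (R : realType) (r : nat).
Notation V := 'rV[R]_r.

Definition norm1 (v : V) : R := \sum_i `|v 0 i|.

Lemma dotvD (u x y : V) : dotv u (x + y) = dotv u x + dotv u y.
Proof. by rewrite /dotv -big_split; apply: eq_bigr => i _; rewrite mxE mulrDr. Qed.

Lemma dotvZ (u x : V) t : dotv u (t *: x) = t * dotv u x.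
Proof. by rewrite /dotv mulr_sumr; apply: eq_bigr => i _; rewrite mxE mulrCA. Qed.

Lemma dotv0 (u : V) : dotv u 0 = 0.
Proof. by rewrite -(scale0r 0) dotvZ mul0r. Qed.

Lemma dotvB (u x y : V) : dotv u (x - y) = dotv u x - dotv u y.
Proof. by rewrite dotvD -scaleN1r dotvZ mulN1r. Qed.

Lemma norm1_0 : norm1 0 = 0.
Proof. by rewrite /norm1 big1 // => i _; rewrite mxE normr0. Qed.

Lemma norm1_ge0 (v : V) : 0 <= norm1 v.
Proof. exact: sumr_ge0. Qed.

Lemma coord_le_norm1 (v : V) i : `|v 0 i| <= norm1 v.
Proof. by rewrite /norm1 (bigD1 i) //= lerDl sumr_ge0. Qed.

Lemma norm1D (x y : V) : norm1 (x + y) <= norm1 x + norm1 y.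
Proof. by rewrite /norm1 -big_split ler_sum // => i _; rewrite mxE ler_normD. Qed.

Lemma norm1Z t (x : V) : norm1 (t *: x) = `|t| * norm1 x.
Proof. by rewrite /norm1 mulr_sumr; apply: eq_bigr => i _; rewrite mxE normrM. Qed.

Lemma norm1_distC (x y : V) : norm1 (x - y) = norm1 (y - x).
Proof. by rewrite -opprB -scaleN1r norm1Z normrN normr1 mul1r. Qed.

Lemma norm1_tri (x y z : V) : norm1 (x - z) <= norm1 (x - y) + norm1 (y - z).
Proof. by rewrite (le_trans _ (norm1D _ _)) // addrA subrK. Qed.

Lemma dotv_le (u x : V) : `|dotv u x| <= norm1 u * norm1 x.
Proof.
rewrite /dotv (le_trans (ler_norm_sum _ _ _)) // /norm1 mulr_sumr ler_sum // => i _.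
by rewrite normrM ler_wpM2r // coord_le_norm1.
Qed.

Lemma norm1_near d (x y : V) : near_v d x y -> norm1 (x - y) <= r%:R * d.
Proof.
move=> H; rewrite mulr_natl -[in X in _ *+ X](card_ord r) -sumr_const /norm1.
by apply: ler_sum => i _; rewrite !mxE ltW.
Qed.

Lemma near_refl d (x : V) : 0 < d -> near_v d x x.
Proof. by move=> dp i; rewrite subrr normr0. Qed.

Lemma near_mono d d' (x y : V) : d <= d' -> near_v d x y -> near_v d' x y.
Proof. by move=> h H i; apply: lt_le_trans (H i) h. Qed.

Lemma near_minl d d' (x y : V) : near_v (Num.min d d') x y -> near_v d x y.
Proof. by apply: near_mono; rewrite ge_min lexx. Qed.

Lemma near_minr d d' (x y : V) : near_v (Num.min d d') x y -> near_v d' x y.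
Proof. by apply: near_mono; rewrite ge_min lexx orbT. Qed.

Lemma near_trans d d' (x y z : V) : near_v d x y -> near_v d' y z -> near_v (d + d') x z.
Proof.
move=> H1 H2 i; rewrite -(subrK (y 0 i) (x 0 i)) -addrA.
by rewrite (le_lt_trans (ler_normD _ _)) // ltrD.
Qed.

Lemma near_add d1 d2 (u1 u2 v1 v2 : V) : near_v d1 u1 v1 -> near_v d2 u2 v2 ->
  near_v (d1 + d2) (u1 + u2) (v1 + v2).
Proof.
move=> h1 h2 i; rewrite !mxE opprD addrACA.
by apply: le_lt_trans (ler_normD _ _) _; apply: ltrD.
Qed.

Lemma dotv_near (u x y : V) d : near_v d x y ->
  `|dotv u x - dotv u y| <= norm1 u * (r%:R * d).
Proof.
move=> H; rewrite -dotvB (le_trans (dotv_le _ _)) // ler_wpM2l ?norm1_ge0 //.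
exact: norm1_near.
Qed.

Lemma contV_id : contV (fun v : V => v).
Proof. by move=> x e ep; exists e. Qed.

Lemma dotv_cont (u x : V) e : 0 < e ->
  exists2 d, 0 < d & forall y, near_v d x y -> `|dotv u x - dotv u y| < e.
Proof.
move=> ep; have kp : 0 < norm1 u * r%:R + 1 by rewrite ltr_pwDr // mulr_ge0 // norm1_ge0.
exists (e / (norm1 u * r%:R + 1)) => [|y hy]; first by rewrite divr_gt0.
apply: le_lt_trans (dotv_near u hy) _.
by rewrite mulrA mulrCA gtr_pMr // ltr_pdivrMr // mul1r ltrDl.
Qed.

Lemma eq_near_cont (g h : V -> R) v :
  (forall e, 0 < e -> exists2 d, 0 < d & forall y, near_v d v y -> `|g v - g y| < e) ->
  (forall e, 0 < e -> exists2 d, 0 < d & forall y, near_v d v y -> `|h v - h y| < e) ->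
  (forall d, 0 < d -> exists2 y, near_v d v y & g y = h y) ->
  g v = h v.
Proof.
move=> gc hc dense; apply/eqP; rewrite -subr_eq0 -normr_le0.
apply/ler_addgt0Pr => e ep; rewrite add0r.
have e2 : 0 < e / 2 by rewrite divr_gt0.
have [dg dgp Hg] := gc _ e2; have [dh dhp Hh] := hc _ e2.
have dp : 0 < Num.min dg dh by rewrite lt_min dgp dhp.
have [y hy gy] := dense _ dp.
have k1 := Hg y (near_minl hy); have k2 := Hh y (near_minr hy).
rewrite (_ : g v - h v = (g v - g y) - (h v - h y)); last by rewrite gy; ring.
by apply: (le_trans (ler_normB _ _)); rewrite (splitr e); apply/ltW/ltrD.
Qed.

End Norm.

Section Cones.
Variables (R : realType) (r : nat).
Notation V := 'rV[R]_r.

Definition full_cone (T : V -> Prop) : Prop :=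
  [/\ forall x z, T x -> T z -> T (x + z), forall x t, T x -> 0 <= t -> T (t *: x)
    & exists y rho, 0 < rho /\ forall w, near_v rho y w -> T w].

Lemma polycone_add (C : V -> Prop) x y : polycone C -> C x -> C y -> C (x + y).
Proof.
move=> [s Hs] /Hs hx /Hs hy; apply/Hs => u us.
by rewrite dotvD addr_ge0 //; [exact: hx|exact: hy].
Qed.

Lemma polycone_scale (C : V -> Prop) x t : polycone C -> C x -> 0 <= t -> C (t *: x).
Proof. by move=> [s Hs] /Hs hx t0; apply/Hs => u us; rewrite dotvZ mulr_ge0 //; exact: hx. Qed.

Lemma polycone_compl_open (C : V -> Prop) x : polycone C -> ~ C x ->
  exists2 d, 0 < d & forall z, near_v d x z -> ~ C z.
Proof.
move=> [s Hs] nC.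
have [u us hu] : exists2 u, u \in s & dotv u x < 0.
  apply: NNPP => h; apply: nC; apply/Hs => u us; rewrite leNgt; apply/negP => hu.
  by apply: h; exists u.
set k := norm1 u * r%:R + 1.
have kp : 0 < k by rewrite ltr_pwDr // mulr_ge0 // norm1_ge0.
exists (- dotv u x / k); first by rewrite divr_gt0 // oppr_gt0.
move=> z hz /Hs /(_ u us) hz0.
have := dotv_near u hz; rewrite mulrA (_ : norm1 u * r%:R = k - 1); last by rewrite addrK.
move=> h.
have h2 : dotv u z - dotv u x <= (k - 1) * (- dotv u x / k).
  by apply: le_trans h; rewrite distrC ler_norm.
have h3 : (k - 1) * (- dotv u x / k) < - dotv u x.
  rewrite mulrBl mul1r mulrCA divff ?gt_eqF // mulr1 ltrBlDr ltrDl divr_gt0 //.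
  by rewrite oppr_gt0.
by have := le_lt_trans h2 h3; rewrite ltrBlDr addNr ltNge hz0.
Qed.

Lemma near_ball_sub (y z : V) rho : near_v rho y z ->
  exists2 rho', 0 < rho' & forall w, near_v rho' z w -> near_v rho y w.
Proof.
move=> H.
have Hi i : exists2 e, 0 < e & e <= rho - `|y 0 i - z 0 i|.
  by exists (rho - `|y 0 i - z 0 i|); rewrite ?subr_gt0.
have [d dp Hd] := common_radius_fin (fun t e e' _ h1 h2 => le_trans h1 h2) Hi.
exists d => // w hw i.
rewrite -(subrK (z 0 i) (y 0 i)) -addrA (le_lt_trans (ler_normD _ _)) //.
by rewrite -ltrBrDl (lt_le_trans (hw i)) // Hd.
Qed.

(* If finitely many polyhedral cones satisfying [Q] cover a ball, one of them
   contains a smaller ball: peel off the cones that miss a point of the ball,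
   using that their complements are open. *)
Lemma polycone_cover_ball (l : list (V -> Prop)) (Q : (V -> Prop) -> Prop) :
  (forall A, List.In A l -> polycone A) ->
  forall (U : V -> Prop) y rho, 0 < rho -> (forall w, near_v rho y w -> U w) ->
  (forall z, U z -> exists A, [/\ List.In A l, Q A & A z]) ->
  exists A y' rho', [/\ List.In A l, Q A, 0 < rho' &
    forall w, near_v rho' y' w -> U w /\ A w].
Proof.
elim: l => [|A l IH] Hp U y rho rp Hb Hc.
  by have [A [[]]] := Hc y (Hb y (near_refl y rp)).
have Hp' A0 : List.In A0 l -> polycone A0 by move=> h; apply: Hp; right.
have [qA|nqA] := classic (Q A); last first.
  have Hc' z : U z -> exists A0, [/\ List.In A0 l, Q A0 & A0 z].
    move=> hz; have [A0 [[e|i] q a]] := Hc z hz; last by exists A0.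
    by case: nqA; rewrite e.
  have [A2 [y2 [rho2 [h1 h2 h3 h4]]]] := IH Hp' U y rho rp Hb Hc'.
  by exists A2, y2, rho2; split => //; right.
have [hA|[z [hyz hnz]]] : (forall w, near_v rho y w -> A w) \/
    exists z, near_v rho y z /\ ~ A z.
  apply: NNPP => /not_or_and [h1 h2]; apply: h1 => w hw.
  by apply: NNPP => hnA; apply: h2; exists w.
  by exists A, y, rho; split => //; [left | move=> w hw; split; [exact: Hb | exact: hA]].
have [r1 r1p Hr1] := near_ball_sub hyz.
have [r2 r2p Hr2] := polycone_compl_open (Hp A (or_introl erefl)) hnz.
set r3 := Num.min r1 r2.
have r3p : 0 < r3 by rewrite lt_min r1p r2p.
have Hc' w : near_v r3 z w -> exists A0, [/\ List.In A0 l, Q A0 & A0 w].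
  move=> hw; have [A0 [[e|i] q a]] := Hc w (Hb w (Hr1 w (near_minl hw))); last by exists A0.
  by case: (Hr2 w (near_minr hw)); rewrite e.
have [A2 [y2 [rho2 [h1 h2 h3 h4]]]] :=
  IH Hp' (fun w => near_v r3 z w) z r3 r3p (fun w h => h) Hc'.
exists A2, y2, rho2; split => //; first by right.
move=> w hw; have [hw1 hw2] := h4 w hw.
by split => //; apply: Hb; apply: Hr1; exact: near_minl hw1.
Qed.

Lemma polycone_bigcap (I : finType) (D : I -> V -> Prop) : (forall b, polycone (D b)) ->
  exists L : seq V, forall x, cone_of L x <-> forall b, D b x.
Proof.
move=> Hp.
suff [L HL] : exists L : seq V, forall x, cone_of L x <-> forall b, b \in enum I -> D b x.
  exists L => x; rewrite HL; split => [h b|h b _]; last exact: h.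
  by apply: h; rewrite mem_enum.
elim: (enum I) => [|b bs [L HL]]; first by exists [::] => x; split => // _ u.
have [s Hs] := Hp b.
exists (s ++ L) => x; split.
  move=> h b'; rewrite inE => /orP [/eqP ->|hb'].
    by apply/Hs => u us; apply: h; rewrite mem_cat us.
  by apply: (proj1 (HL x)) => // u uL; apply: h; rewrite mem_cat uL orbT.
move=> h u; rewrite mem_cat => /orP [us|uL].
  by have /Hs := h b (mem_head _ _); apply.
by apply: (proj2 (HL x)) => // b' hb'; apply: h; rewrite inE hb' orbT.
Qed.

(* A point [x0] of the relative interior: every facet inequality that is not an
   equality on the cone is strict at [x0], so one can move back from [x0]
   along any direction of the cone. *)
Lemma cone_relint_point (L : seq V) : exists x0, cone_of L x0 /\
  forall c, cone_of L c -> exists2 s, 0 < s & cone_of L (x0 - s *: c).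
Proof.
have [x0 [hx0 hp]] : exists x0, cone_of L x0 /\
    forall u, u \in L -> (exists c, cone_of L c /\ 0 < dotv u c) -> 0 < dotv u x0.
  suff : forall L' : seq V, {subset L' <= L} -> exists x0, cone_of L x0 /\
     forall u, u \in L' -> (exists c, cone_of L c /\ 0 < dotv u c) -> 0 < dotv u x0.
    by apply.
  elim => [|u L' IH] sub.
    by exists 0; split => // u _; rewrite dotv0.
  have [x0 [hx0 hp]] := IH (fun v h => sub v (@mem_behead _ (u :: L') v h)).
  have [[c [cc uc]]|hc] := classic (exists c, cone_of L c /\ 0 < dotv u c).
    exists (x0 + c); split.
      by move=> v vL; rewrite dotvD addr_ge0 //; [apply: hx0|apply: cc].
    move=> v; rewrite inE => /orP [/eqP ->|vL'] hv.
      by rewrite dotvD ltr_pwDr // hx0 // sub // mem_head.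
    rewrite dotvD; apply: (lt_le_trans (hp v vL' hv)); rewrite lerDl.
    by apply: cc; apply: sub; rewrite inE vL' orbT.
  exists x0; split => // v; rewrite inE => /orP [/eqP ->|vL'] h; first by [].
  exact: hp.
exists x0; split => // c cc.
have H u : List.In u L -> exists2 s, 0 < s & (u \in L -> s * dotv u c <= dotv u x0).
  move=> _; have [uL|] := boolP (u \in L); last by exists 1.
  have [uc|uc] := ltP 0 (dotv u c).
    exists (dotv u x0 / dotv u c) => [|_]; last by rewrite divfK ?gt_eqF.
    by rewrite divr_gt0 // hp //; exists c.
  by exists 1 => // _; rewrite mul1r (le_trans uc) // hx0.
have mono u e e' : 0 < e' -> e' <= e ->
    (u \in L -> e * dotv u c <= dotv u x0) -> (u \in L -> e' * dotv u c <= dotv u x0).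
  move=> _ h1 h2 uL; apply: le_trans (h2 uL).
  by apply: ler_wpM2r => //; apply: cc.
have [s sp Hs] := common_radius mono H.
exists s => // u uL; rewrite dotvB dotvZ subr_ge0; exact: Hs (In_of_mem uL) uL.
Qed.

End Cones.

Section Fans.
Variables (R : realType) (r : nat) (I : finType).
Notation V := 'rV[R]_r.
Variable Phi : I -> list (V -> Prop).
Hypothesis Phi_complete : forall b, complete_fan (Phi b).

Lemma fan_polycone b A : List.In A (Phi b) -> polycone A.
Proof. by have [[h _] _] := Phi_complete b; apply: h. Qed.

Lemma fan_cones_around x0 : exists2 d, 0 < d & forall b z, near_v d x0 z ->
  exists A, [/\ List.In A (Phi b), A x0 & A z].
Proof.
suff H b : exists2 d, 0 < d & forall z, near_v d x0 z ->
    exists A, [/\ List.In A (Phi b), A x0 & A z].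
  by apply: common_radius_fin H => b e e' _ h1 h2 z hz; apply: h2; exact: near_mono h1 hz.
have H2 A : List.In A (Phi b) ->
    exists2 d, 0 < d & (~ A x0 -> forall z, near_v d x0 z -> ~ A z).
  move=> hA; have [hx|hx] := classic (A x0); first by exists 1.
  by have [d dp Hd] := polycone_compl_open (fan_polycone hA) hx; exists d.
have [d dp Hd] := common_radius
  (P := fun A e => ~ A x0 -> forall z, near_v e x0 z -> ~ A z)
  (fun A e e' _ h1 h2 hn z hz => h2 hn z (near_mono h1 hz)) H2.
exists d => // z hz; have [_ Hcov] := Phi_complete b; have [A hA Az] := Hcov z.
by exists A; split => //; apply: NNPP => hn; exact: Hd A hA hn z hz Az.
Qed.

(* Each fan has a cone through [x0]; the cones through [x0] cover a
   neighbourhood of [x0], so successively one of them contains a ball. *)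
Lemma fan_common_ball x0 : exists y rho (A : I -> V -> Prop), 0 < rho /\
  forall b, [/\ List.In (A b) (Phi b), A b x0 & forall w, near_v rho y w -> A b w].
Proof.
have [d dp Hd] := fan_cones_around x0.
suff /(_ (enum I)) [y [rho [rp _ HA]]] : forall bs : seq I, exists y rho,
    [/\ 0 < rho, forall w, near_v rho y w -> near_v d x0 w &
    forall b, List.In b bs -> exists A,
      [/\ List.In A (Phi b), A x0 & forall w, near_v rho y w -> A w]].
  have [A HA'] := functional_choice _ (fun b => HA b (In_of_mem (mem_enum I b))).
  by exists y, rho, A.
elim => [|b bs [y [rho [h1 h2 h3]]]]; first by exists x0, d.
have Hc z : near_v rho y z -> exists A, [/\ List.In A (Phi b), A x0 & A z].
  by move=> hz; apply: Hd; exact: h2.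
have [A [y' [rho' [k1 k2 k3 k4]]]] :=
  polycone_cover_ball (@fan_polycone b) (Q := fun A => A x0) h1 (fun w h => h) Hc.
exists y', rho'; split => // [w hw|b' [<-|hb']]; first exact: h2 _ (k4 w hw).1.
  by exists A; split => // w hw; exact: (k4 w hw).2.
have [A' [a1 a2 a3]] := h3 b' hb'.
by exists A'; split => // w hw; exact: a3 _ (k4 w hw).1.
Qed.

(* Two cones of a fan meet in a common face; a face containing a relative
   interior point of a subcone [C0] contains all of [C0]. *)
Lemma fan_cone_sub_of_relint (C0 : V -> Prop) x0 (D : V -> Prop) b A :
  List.In D (Phi b) -> List.In A (Phi b) -> (forall x, C0 x -> D x) ->
  C0 x0 -> (forall c, C0 c -> exists2 s, 0 < s & C0 (x0 - s *: c)) ->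
  A x0 -> forall c, C0 c -> A c.
Proof.
move=> hD hA hC0 c0 relint Ax0 c Cc.
have [[_ [_ Hmeet]] _] := Phi_complete b.
have [_ [u [hu1 hu2]]] := Hmeet A D hA hD.
have ux0 : dotv u x0 = 0 by have [] := (hu2 x0).1 (conj Ax0 (hC0 _ c0)).
have [s sp hs] := relint c Cc.
have h1 := hu1 _ (hC0 _ hs); rewrite dotvB dotvZ ux0 sub0r oppr_ge0 in h1.
have h2 := hu1 _ (hC0 _ Cc).
have uc : dotv u c = 0 by apply/eqP; rewrite eq_le h2 andbT -(pmulr_rle0 _ sp).
by have [] := (hu2 c).2 (conj (hC0 _ Cc) uc).
Qed.

Lemma fan_full_cone_over (C0 : V -> Prop) x0 (D : I -> V -> Prop) :
  (forall b, List.In (D b) (Phi b)) -> (forall b x, C0 x -> D b x) ->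
  C0 x0 -> (forall c, C0 c -> exists2 s, 0 < s & C0 (x0 - s *: c)) ->
  exists y rho (A : I -> V -> Prop), 0 < rho /\ forall b, [/\ List.In (A b) (Phi b),
    forall x, C0 x -> A b x & forall w, near_v rho y w -> A b w].
Proof.
move=> HD HC0 c0 relint; have [y [rho [A [rp HA]]]] := fan_common_ball x0.
exists y, rho, A; split => // b; have [hA Ax0 ball] := HA b; split => //.
exact: fan_cone_sub_of_relint (HD b) hA (HC0 b) c0 relint Ax0.
Qed.

Variable f : I -> V -> V.
Hypothesis Phi_lin : forall b C, List.In C (Phi b) -> lin_on (f b) C.

Lemma fan_linear_full_cone (C0 : V -> Prop) x0 (D : I -> V -> Prop) :
  (forall b, List.In (D b) (Phi b)) -> (forall b x, C0 x -> D b x) ->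
  C0 x0 -> (forall c, C0 c -> exists2 s, 0 < s & C0 (x0 - s *: c)) ->
  exists C : V -> Prop, [/\ full_cone C, forall x, C0 x -> C x &
    forall b x1 x2, C x1 -> C x2 -> f b (x1 + x2) = f b x1 + f b x2].
Proof.
move=> HD HC0 c0 relint; have [y [rho [A [rp HA]]]] := fan_full_cone_over HD HC0 c0 relint.
have Aadd b x1 x2 : A b x1 -> A b x2 -> A b (x1 + x2).
  by have [hA _ _] := HA b; exact: polycone_add (fan_polycone hA).
exists (fun x => forall b, A b x); split.
- split => [x1 x2 h1 h2 b|x t h t0 b|]; first exact: Aadd.
    by have [hA _ _] := HA b; exact: polycone_scale (fan_polycone hA) (h b) t0.
  by exists y, rho; split => // w hw b; have [_ _ ball] := HA b; exact: ball.
- by move=> x hx b; have [_ sub _] := HA b; exact: sub.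
move=> b x1 x2 h1 h2; have [hA _ _] := HA b; have [B HB] := Phi_lin hA.
by rewrite !HB ?mulmxDl //; apply: Aadd.
Qed.

End Fans.

Section Subring.
Variables (R : realType) (r : nat) (F : R -> Prop).
Notation V := 'rV[R]_r.
Hypothesis F_subring : is_subring F.

Lemma F1 : F 1. Proof. by case: F_subring. Qed.
Lemma FB x y : F x -> F y -> F (x - y). Proof. by case: F_subring => _ [h _]; apply: h. Qed.
Lemma FM x y : F x -> F y -> F (x * y). Proof. by case: F_subring => _ [_ h]; apply: h. Qed.
Lemma F0 : F 0. Proof. by rewrite -(subrr 1); apply: FB; apply: F1. Qed.
Lemma FN x : F x -> F (- x). Proof. by move=> h; rewrite -sub0r; apply: FB => //; apply: F0. Qed.
Lemma FD x y : F x -> F y -> F (x + y).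
Proof. by move=> hx hy; rewrite -(opprK y); apply: FB => //; apply: FN. Qed.
Lemma Fnat n : F n%:R.
Proof. by elim: n => [|n IH]; [exact: F0 | rewrite -addn1 natrD; apply: FD => //; apply: F1]. Qed.
Lemma Fint (z : int) : F z%:~R.
Proof. by case: z => n; [exact: Fnat | rewrite NegzE mulrNz; apply: FN; exact: Fnat]. Qed.
Lemma Fsum (J : Type) (s : seq J) (P : pred J) (g : J -> R) :
  (forall j, P j -> F (g j)) -> F (\sum_(j <- s | P j) g j).
Proof. by move=> h; apply: big_ind => //; [apply: F0 | apply: FD]. Qed.
Lemma Fabs x : F x -> F `|x|.
Proof. by move=> h; case: (ler0P x) => _ //; apply: FN. Qed.
Lemma Fdot (u v : V) : inFv F u -> inFv F v -> F (dotv u v).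
Proof. by move=> hu hv; apply: Fsum => i _; apply: FM. Qed.
Lemma Fnorm1 (v : V) : inFv F v -> F (norm1 v).
Proof. by move=> hv; apply: Fsum => i _; apply: Fabs. Qed.

Lemma inFv0 : inFv F (0 : V). Proof. by move=> i; rewrite mxE; apply: F0. Qed.
Lemma inFvD (u v : V) : inFv F u -> inFv F v -> inFv F (u + v).
Proof. by move=> hu hv i; rewrite mxE; apply: FD. Qed.
Lemma inFvN (u : V) : inFv F u -> inFv F (- u).
Proof. by move=> hu i; rewrite mxE; apply: FN. Qed.
Lemma inFvB (u v : V) : inFv F u -> inFv F v -> inFv F (u - v).
Proof. by move=> hu hv; apply: inFvD => //; apply: inFvN. Qed.
Lemma inFvZ t (u : V) : F t -> inFv F u -> inFv F (t *: u).
Proof. by move=> ht hu i; rewrite mxE; apply: FM. Qed.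
Lemma inFv_e i : inFv F ('e_i : V).
Proof. by move=> j; rewrite mxE; case: (_ && _); [apply: F1|apply: F0]. Qed.
Lemma inFv_mulmx (v : V) (B : 'M[R]_r) :
  inFv F v -> (forall i j, F (B i j)) -> inFv F (v *m B).
Proof. by move=> hv hB j; rewrite mxE; apply: Fsum => i _; apply: FM. Qed.

End Subring.

Section FracPoints.
Variables (R : realType) (r : nat) (F : R -> Prop).
Notation V := 'rV[R]_r.
Hypothesis F_subring : is_subring F.

Definition fracv (N : nat) (w : V) : V := N%:R^-1 *: w.

Definition floor_row (N : nat) (y : V) : V := \row_i (Num.floor (N%:R * y 0 i))%:~R.

Lemma inFv_floor_row N y : inFv F (floor_row N y).
Proof. by move=> i; rewrite mxE; apply: Fint. Qed.

Lemma exists_inv_nat_lt (d : R) : 0 < d -> exists2 N, (0 < N)%N & N%:R^-1 < d.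
Proof.
move=> dp; set N := Num.Def.archi_bound (1 / d).
have hN : 1 / d < N%:R by apply: archi_boundP; rewrite divr_ge0 // ltW.
have Np : (0 : R) < N%:R by apply: lt_trans hN; rewrite divr_gt0.
by exists N; [rewrite -(ltr0n R) | rewrite invf_plt ?posrE // -div1r].
Qed.

Lemma near_fracv_floor N (y : V) : (0 < N)%N -> near_v N%:R^-1 y (fracv N (floor_row N y)).
Proof.
move=> Np i; have Nr : (0 : R) < N%:R by rewrite ltr0n.
rewrite /fracv !mxE (_ : y 0 i - _ = N%:R^-1 * (N%:R * y 0 i - (Num.floor (N%:R * y 0 i))%:~R)).
  rewrite normrM gtr0_norm ?invr_gt0 // gtr_pMr ?invr_gt0 //.
  have /andP [h1 h2] := floor_itv (N%:R * y 0 i); rewrite intrD in h2.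
  by rewrite ger0_norm ?subr_ge0 // ltrBlDl -[1]/(1%:~R).
by rewrite mulrBr mulKf ?gt_eqF.
Qed.

Lemma fracv_dense (x : V) d : 0 < d ->
  exists N w, [/\ (0 < N)%N, inFv F w & near_v d x (fracv N w)].
Proof.
move=> dp; have [N Np hN] := exists_inv_nat_lt dp.
exists N, (floor_row N x); split => //; first exact: inFv_floor_row.
exact: near_mono (ltW hN) (near_fracv_floor x Np).
Qed.

Lemma fracv_dense2 (x x' : V) d : 0 < d -> exists N w w',
  [/\ (0 < N)%N, inFv F w, inFv F w', near_v d x (fracv N w) & near_v d x' (fracv N w')].
Proof.
move=> dp; have [N1 [w1 [N1p hw1 h1]]] := fracv_dense x dp.
have [N2 [w2 [N2p hw2 h2]]] := fracv_dense x' dp.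
have fracvM N N' w : (0 < N)%N -> (0 < N')%N -> fracv (N * N') (N'%:R *: w) = fracv N w.
  move=> Np N'p; rewrite /fracv scalerA natrM invfM -mulrA mulVf ?mulr1 //.
  by rewrite pnatr_eq0 -lt0n.
exists (N1 * N2)%N, (N2%:R *: w1), (N1%:R *: w2); split.
- by rewrite muln_gt0 N1p.
- by apply: inFvZ => //; apply: Fnat.
- by apply: inFvZ => //; apply: Fnat.
- by rewrite fracvM.
- by rewrite mulnC fracvM.
Qed.

Section ConeWithBall.
Variable T : V -> Prop.
Hypothesis T_add : forall x z, T x -> T z -> T (x + z).
Hypothesis T_scale : forall x t, T x -> 0 <= t -> T (t *: x).
Variables (y : V) (rho : R).
Hypothesis rho_gt0 : 0 < rho.
Hypothesis T_ball : forall w, near_v rho y w -> T w.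

Lemma cone_ball0 : T 0.
Proof. by rewrite -(scale0r y); apply: T_scale (lexx 0); apply/T_ball/near_refl. Qed.

(* Scaling a ball of the cone by [N] moves an F-point to its centre. *)
Lemma cone_ball_Fpoint : exists w rho',
  [/\ inFv F w, 0 < rho' & forall u, near_v rho' w u -> T u].
Proof.
have rho2 : 0 < rho / 2 by rewrite divr_gt0.
have [N Np hN] := exists_inv_nat_lt rho2.
have Nr : (0 : R) < N%:R by rewrite ltr0n.
exists (floor_row N y), (N%:R * (rho / 2)); split.
- exact: inFv_floor_row.
- by rewrite mulr_gt0.
move=> u hu.
rewrite -[u](scale1r u) -(mulfV (lt0r_neq0 Nr)) -scalerA.
apply: T_scale (ltW Nr); apply: T_ball; rewrite (splitr rho).
apply: near_trans (near_mono (ltW hN) (near_fracv_floor y Np)) _ => i.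
rewrite /fracv !mxE -mulrBr normrM gtr0_norm ?invr_gt0 // mulrC ltr_pdivrMr //.
by have := hu i; rewrite mxE [X in _ < X]mulrC.
Qed.

(* Push [v] slightly towards the ball, into the interior, and approximate there. *)
Lemma cone_fracv_dense v d : T v -> 0 < d ->
  exists N w, [/\ (0 < N)%N, inFv F w, T (fracv N w) & near_v d v (fracv N w)].
Proof.
move=> Tv dp.
have yp : 0 < norm1 y + rho + 1 by rewrite ltr_pwDr // addr_ge0 ?norm1_ge0 // ltW.
set t := d / (norm1 y + rho + 1).
have tp : 0 < t by rewrite divr_gt0.
set u0 := v + t *: y.
have Hu0 u : near_v (t * rho) u0 u -> T u.
  move=> hu; rewrite (_ : u = v + t *: (y + t^-1 *: (u - u0))); last first.
    by rewrite scalerDr scalerA divff ?gt_eqF // scale1r /u0 addrA [_ + (u - _)]addrC subrK.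
  apply: T_add Tv _; apply: T_scale (ltW tp); apply: T_ball => i.
  rewrite !mxE opprD addNKr normrN normrM gtr0_norm ?invr_gt0 //.
  by rewrite ltr_pdivrMl // distrC; have := hu i; rewrite /u0 !mxE.
have [N [w [Np hw hnear]]] := fracv_dense u0 (mulr_gt0 tp rho_gt0).
exists N, w; split => //; first exact: Hu0.
move=> i; rewrite (_ : v 0 i - _ = (u0 0 i - fracv N w 0 i) - t * y 0 i); last first.
  by rewrite /u0 !mxE addrAC addrK.
apply: le_lt_trans (ler_normB _ _) _; rewrite normrM gtr0_norm //.
have h1 := hnear i; have h2 := ler_wpM2l (ltW tp) (coord_le_norm1 y i).
have h3 : t * (norm1 y + rho + 1) = d by rewrite /t mulfVK ?gt_eqF.
nra.
Qed.

Lemma cone_shifted_basis : exists w M, [/\ inFv F w, T w &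
  forall (s : R) i, `|s| <= 1 -> T (s *: 'e_i + M%:R *: w)].
Proof.
have [w [rho' [wF rp' Hw]]] := cone_ball_Fpoint.
have [M Mp hM] := exists_inv_nat_lt rp'.
have Mr : (0 : R) < M%:R by rewrite ltr0n.
exists w, M; split => //; first exact/Hw/near_refl.
move=> s i hs.
rewrite (_ : _ + _ = M%:R *: (w + M%:R^-1 *: (s *: 'e_i))); last first.
  by rewrite scalerDr scalerA divff ?gt_eqF // scale1r addrC.
apply: T_scale (ltW Mr); apply: Hw => j; rewrite !mxE opprD addNKr normrN.
rewrite normrM gtr0_norm ?invr_gt0 // (le_lt_trans _ hM) // ger_pMr ?invr_gt0 //.
rewrite normrM (le_trans (ler_wpM2r _ hs)) // mul1r.
by case: (_ && _); rewrite ?normr1 ?normr0.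
Qed.

Variable g : V -> R.
Hypothesis g_F : forall v, inFv F v -> F (g v).
Hypothesis g_hom : forall l v, F l -> 0 <= l -> inFv F v -> g (l *: v) = l * g v.
Hypothesis g_add : forall v1 v2, inFv F v1 -> inFv F v2 -> T v1 -> T v2 ->
  g v1 + g v2 = g (v1 + v2).

Lemma g_sum_on_cone (J : Type) (s : seq J) (h : J -> V) :
  (forall j, inFv F (h j) /\ T (h j)) -> g (\sum_(j <- s) h j) = \sum_(j <- s) g (h j).
Proof.
move=> Hh.
suff [_ _ ->] : [/\ inFv F (\sum_(j <- s) h j), T (\sum_(j <- s) h j)
   & g (\sum_(j <- s) h j) = \sum_(j <- s) g (h j)] by [].
apply: (@big_ind2 V R (fun x z => [/\ inFv F x, T x & g x = z])).
- split; [exact: inFv0 | exact: cone_ball0 |].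
  by rewrite -(scale0r 0) g_hom ?mul0r //; [exact: F0 | exact: inFv0].
- move=> x1 x2 z1 z2 [h1 h2 <-] [h3 h4 <-].
  by split; [exact: inFvD | exact: T_add | rewrite g_add].
- by move=> j _; have [] := Hh j.
Qed.

(* [c i] is read off at [e_i + M w]; additivity at [(-e_i + M w) + (e_i + M w) = 2 M w]
   then gives the value at [-e_i + M w]. *)
Lemma cone_linear_on_shifts : exists w M c, [/\ inFv F w, T w, inFv F c &
  forall (s : R) i, s = 1 \/ s = -1 ->
    T (s *: 'e_i + M%:R *: w) /\ g (s *: 'e_i + M%:R *: w) = s * c 0 i + M%:R * g w].
Proof.
have [w [M [wF Tw Tpm]]] := cone_shifted_basis.
have FMw : inFv F (M%:R *: w) by apply: inFvZ => //; apply: Fnat.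
have eF s i : F s -> inFv F (s *: 'e_i + M%:R *: w).
  by move=> hs; apply: inFvD => //; apply: inFvZ => //; apply: inFv_e.
have F_1 := F1 F_subring; have F_N1 := FN F_subring F_1.
have T1 i : T (1 *: 'e_i + M%:R *: w) by apply: Tpm; rewrite normr1.
have TN1 i : T (-1 *: 'e_i + M%:R *: w) by apply: Tpm; rewrite normrN normr1.
set c : V := \row_i (g (1 *: 'e_i + M%:R *: w) - M%:R * g w).
exists w, M, c; split => //.
  move=> i; rewrite mxE; apply: FB => //; first by apply: g_F; apply: eF.
  by apply: FM => //; [apply: Fnat | apply: g_F].
move=> s i [->|->]; split => //; first by rewrite mxE mul1r subrK.
have h := g_add (eF _ i F_N1) (eF _ i F_1) (TN1 i) (T1 i).
have g2M : g ((M + M)%:R *: w) = (M + M)%:R * g w by apply: g_hom => //; apply: Fnat.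
rewrite scaleN1r scale1r addrACA addNr add0r -scalerDl -natrD g2M natrD in h.
rewrite mxE scaleN1r scale1r; lra.
Qed.

Lemma additive_on_cone_linear :
  exists c, inFv F c /\ forall v, inFv F v -> T v -> g v = dotv c v.
Proof.
have [w [M [c [wF Tw cF Hpm]]]] := cone_linear_on_shifts.
exists c; split => // v hv Tv.
set K := M%:R * norm1 v.
have KF : F K by apply: FM => //; [exact: Fnat | exact: Fnorm1].
have K0 : 0 <= K by rewrite mulr_ge0 // norm1_ge0.
have h1 : g (v + K *: w) = g v + K * g w.
  by rewrite -g_add //; [rewrite g_hom | apply: inFvZ | apply: T_scale].
(* [v + K w] is a nonnegative combination of the shifts [t_i e_i + M w], [t_i = sign v_i]. *)
pose t i : R := if 0 <= v 0 i then 1 else -1.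
have t_pm i : t i = 1 \/ t i = -1 by rewrite /t; case: ifP; [left | right].
have tE i : `|v 0 i| * t i = v 0 i.
  rewrite /t; case: ifP => h; first by rewrite mulr1 ger0_norm.
  by rewrite mulrN1 ltr0_norm ?opprK // ltNge h.

have decomp : v + K *: w = \sum_(i < r) `|v 0 i| *: (t i *: 'e_i + M%:R *: w).
  rewrite [X in X + _]row_sum_delta /K.
  under [RHS]eq_bigr => i _ do rewrite scalerDr scalerA tE scalerA.
  rewrite big_split /=; congr (_ + _).
  by rewrite -scaler_suml mulr_sumr /norm1; congr (_ *: _); apply: eq_bigr => i _; rewrite mulrC.
have tF i : F (t i) by case: (t_pm i) => ->; [exact: F1 | apply: FN => //; exact: F1].
have vF i : F `|v 0 i| by exact: Fabs.
have FMw := inFvZ F_subring (Fnat F_subring M) wF.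
have shiftF i := inFvD F_subring (inFvZ F_subring (tF i) (inFv_e F_subring i)) FMw.
have : g v + K * g w = dotv c v + K * g w.
  rewrite -h1 decomp g_sum_on_cone => [|i]; last first.
    by split; [apply: inFvZ | apply: T_scale => //; exact: (Hpm _ i (t_pm i)).1].
  under eq_bigr => i _ do rewrite g_hom // (Hpm _ i (t_pm i)).2 mulrDr mulrA tE.
  rewrite big_split /= /dotv /K -mulr_suml; congr (_ + _).
    by apply: eq_bigr => i _; rewrite mulrC.
  by rewrite -/(norm1 v) mulrCA mulrA.
by move/addIr.
Qed.

End ConeWithBall.

End FracPoints.

Section McShane.
Variables (R : realType) (r : nat) (F : R -> Prop).
Notation V := 'rV[R]_r.
Hypothesis F_subring : is_subring F.
Variable g : V -> R.
Hypothesis g_super : forall u v, inFv F u -> inFv F v -> g u + g v <= g (u + v).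
Hypothesis g_hom : forall l v, F l -> 0 <= l -> inFv F v -> g (l *: v) = l * g v.

Lemma g0 : g 0 = 0.
Proof. by rewrite -(scale0r 0) g_hom ?mul0r //; [exact: F0 | exact: inFv0]. Qed.

Lemma g_nat n v : inFv F v -> g (n%:R *: v) = n%:R * g v.
Proof. by move=> hv; apply: g_hom => //; exact: Fnat. Qed.

Definition lip_const : R := \sum_(i < r) (`|g 'e_i| + `|g (- 'e_i)|).

Lemma lip_const_ge0 : 0 <= lip_const.
Proof. by apply: sumr_ge0 => i _; rewrite addr_ge0. Qed.

Lemma g_super_sum (J : Type) (s : seq J) (h : J -> V) :
  (forall j, inFv F (h j)) -> \sum_(j <- s) g (h j) <= g (\sum_(j <- s) h j).
Proof.
move=> Hh.
suff [_ ->] : inFv F (\sum_(j <- s) h j) /\ \sum_(j <- s) g (h j) <= g (\sum_(j <- s) h j).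
  by [].
apply: (@big_ind2 R V (fun y x => inFv F x /\ y <= g x) 0 +%R 0 +%R).
- by rewrite g0; split => //; exact: inFv0.
- move=> y1 x1 y2 x2 [h1 h2] [h3 h4]; split; first exact: inFvD.
  exact: le_trans (lerD h2 h4) (g_super h1 h3).
- by move=> j _; split.
Qed.

Lemma g_scaled_basis_lower s i : F s ->
  - (`|s| * (`|g 'e_i| + `|g (- 'e_i)|)) <= g (s *: 'e_i).
Proof.
move=> sF; have hn1 := normr_ge0 (g 'e_i); have hn2 := normr_ge0 (g (- 'e_i)).
have [s0|s0] := leP 0 s.
  rewrite g_hom // ?(ger0_norm s0); last exact: inFv_e.
  have := lerNnormlW (lexx `|s * g 'e_i|); rewrite normrM ger0_norm // => h1.
  have h2 : 0 <= s * `|g (- 'e_i)| by rewrite mulr_ge0.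
  nra.
rewrite -[s]opprK scaleNr -scalerN g_hom ?oppr_ge0 ?(ltW s0) //; first last.
- by apply: inFvN => //; exact: inFv_e.
- exact: FN.
rewrite opprK (ltr0_norm s0).
have := lerNnormlW (lexx `|- s * g (- 'e_i)|); rewrite normrM normrN (ltr0_norm s0) => h1.
have h2 : 0 <= - s * `|g 'e_i| by rewrite mulr_ge0 // oppr_ge0 ltW.
nra.
Qed.

Lemma g_lower w : inFv F w -> - (lip_const * norm1 w) <= g w.
Proof.
move=> hw; rewrite [X in g X]row_sum_delta.
apply: le_trans (g_super_sum _ (fun i => inFvZ F_subring (hw i) (inFv_e F_subring i))).
rewrite /norm1 mulr_sumr -sumrN ler_sum // => i _.
apply: le_trans (g_scaled_basis_lower i (hw i)); rewrite lerN2 mulrC.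
apply: ler_wpM2r => //; rewrite /lip_const (bigD1 i) //= lerDl.
by apply: sumr_ge0 => j _; rewrite addr_ge0.
Qed.

Lemma g_lip u v : inFv F u -> inFv F v -> g v - g u <= lip_const * norm1 (u - v).
Proof.
move=> hu hv; have huv := inFvB F_subring hu hv.
have h := g_super hv huv; rewrite [v + _]addrC subrK in h.
have := g_lower huv; lra.
Qed.

Lemma g_fracv_lip N N' w w' : (0 < N)%N -> (0 < N')%N -> inFv F w -> inFv F w' ->
  g w / N%:R - g w' / N'%:R <= lip_const * norm1 (fracv N' w' - fracv N w).
Proof.
move=> Np N'p hw hw'.
have Nr : (0 : R) < N%:R by rewrite ltr0n.
have N'r : (0 : R) < N'%:R by rewrite ltr0n.
have NN : 0 < N%:R * N'%:R :> R by rewrite mulr_gt0.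
have h := @g_lip (N%:R *: w') (N'%:R *: w) (inFvZ F_subring (Fnat F_subring _) hw')
  (inFvZ F_subring (Fnat F_subring _) hw).
rewrite !g_nat // in h.
have e : N%:R *: w' - N'%:R *: w = (N%:R * N'%:R) *: (fracv N' w' - fracv N w).
  by rewrite /fracv scalerBr !scalerA; congr (_ *: _ - _ *: _); field; rewrite gt_eqF.
rewrite e norm1Z (gtr0_norm NN) in h.
rewrite -(ler_pM2r NN) mulrBl.
have -> : g w / N%:R * (N%:R * N'%:R) = N'%:R * g w by field; rewrite gt_eqF.
have -> : g w' / N'%:R * (N%:R * N'%:R) = N%:R * g w' by field; rewrite gt_eqF.
by rewrite -mulrA [norm1 _ * _]mulrC.
Qed.

(* McShane extension of [fracv N w |-> g w / N] from the dense set of [fracv] points. *)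
Definition mcshane_set (x : V) : R -> Prop := fun t => exists N w,
  [/\ (0 < N)%N, inFv F w & t = g w / N%:R - lip_const * norm1 (x - fracv N w)].

Definition mcshane (x : V) : R := sup (mcshane_set x).

Lemma mcshane_set_ub x N' w' t : (0 < N')%N -> inFv F w' -> mcshane_set x t ->
  t <= g w' / N'%:R + lip_const * norm1 (x - fracv N' w').
Proof.
move=> N'p hw' [N [w [Np hw ->]]].
have h := g_fracv_lip Np N'p hw hw'.
have h2 := ler_wpM2l lip_const_ge0 (norm1_tri (fracv N' w') x (fracv N w)).
rewrite [norm1 (fracv N' w' - x)]norm1_distC in h2; lra.
Qed.

Lemma mcshane_has_sup x : classical_sets.has_sup (mcshane_set x).
Proof.
split.
  exists (g 0 / 1%:R - lip_const * norm1 (x - fracv 1 0)).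
  by exists 1%N, 0; split => //; exact: inFv0.
exists (g 0 / 1%:R + lip_const * norm1 (x - fracv 1 0)) => t ht.
by apply: mcshane_set_ub => //; exact: inFv0.
Qed.

Lemma mcshane_fracv N w : (0 < N)%N -> inFv F w -> mcshane (fracv N w) = g w / N%:R.
Proof.
move=> Np hw; apply/eqP; rewrite eq_le; apply/andP; split.
  apply: ge_sup; first by have [] := mcshane_has_sup (fracv N w).
  by move=> t /(mcshane_set_ub Np hw); rewrite subrr norm1_0 mulr0 addr0.
apply: sup_upper_bound; first exact: mcshane_has_sup.
by exists N, w; split => //; rewrite subrr norm1_0 mulr0 subr0.
Qed.

Lemma mcshane_extends w : inFv F w -> mcshane w = g w.
Proof.
move=> hw; rewrite {1}(_ : w = fracv 1 w) ?mcshane_fracv ?divr1 //.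
by rewrite /fracv invr1 scale1r.
Qed.

Lemma mcshane_lip x y : mcshane x <= mcshane y + lip_const * norm1 (x - y).
Proof.
apply: ge_sup; first by have [] := mcshane_has_sup x.
move=> t [N [w [Np hw ->]]].
have h : g w / N%:R - lip_const * norm1 (y - fracv N w) <= mcshane y.
  by apply: sup_upper_bound; [exact: mcshane_has_sup | exists N, w].
have h2 := ler_wpM2l lip_const_ge0 (norm1_tri y x (fracv N w)).
rewrite [norm1 (y - x)]norm1_distC in h2; lra.
Qed.

Lemma mcshane_cont_comp (h : V -> V) : contV h -> forall x e, 0 < e ->
  exists2 d, 0 < d & forall y, near_v d x y -> `|mcshane (h x) - mcshane (h y)| < e.
Proof.
move=> hc x e ep.
have kp : 0 < lip_const * r%:R + 1 by rewrite ltr_pwDr // mulr_ge0 // lip_const_ge0.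
have [d dp Hd] := hc x (e / (lip_const * r%:R + 1)) (divr_gt0 ep kp).
exists d => // y hy.
have habs : `|mcshane (h x) - mcshane (h y)| <= lip_const * norm1 (h x - h y).
  rewrite ler_norml; have h1 := mcshane_lip (h x) (h y).
  have h2 := mcshane_lip (h y) (h x); rewrite norm1_distC in h2.
  by apply/andP; split; lra.
apply: le_lt_trans habs _.
apply: le_lt_trans (ler_wpM2l lip_const_ge0 (norm1_near (Hd y hy))) _.
by rewrite mulrA mulrCA gtr_pMr // ltr_pdivrMr // mul1r ltrDl.
Qed.

End McShane.

Section Polyptych.
Variables (R : realType) (r : nat) (I : finType) (F : R -> Prop).
Notation V := 'rV[R]_r.
Variable mu : I -> I -> V -> V.
Hypothesis mu_polyptych : is_polyptych F mu.

Lemma mu_id a x : mu a a x = x. Proof. by case: mu_polyptych => _ []. Qed.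
Lemma mu_inv a b x : mu b a (mu a b x) = x.
Proof. by case: mu_polyptych => _ [_ [h _]]; case: (h a b x). Qed.
Lemma mu_comp a b c x : mu b c (mu a b x) = mu a c x.
Proof. by case: mu_polyptych => _ [_ [_ h]]. Qed.
Lemma mu_cont a b : contV (mu a b). Proof. by case: mu_polyptych => /(_ a b) []. Qed.

Lemma mu_fan a b : exists Phi, complete_fan Phi /\ forall C, List.In C Phi -> lin_on (mu a b) C.
Proof.
case: mu_polyptych => /(_ a b) [_ [Phi [hc H]]] _; exists Phi; split => // C hC.
by have [_ [B [_ HB]]] := H C hC; exists B.
Qed.

Lemma mu_inFv (G : R -> Prop) : is_subring G -> (forall x, F x -> G x) ->
  forall a b v, inFv G v -> inFv G (mu a b v).
Proof.
move=> hG FG a b v hv; case: mu_polyptych => /(_ a b) [_ [Phi [[_ Hcov] H]]] _.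
have [C hC Cv] := Hcov v; have [_ [B [hB HB]]] := H C hC.
by rewrite HB //; apply: inFv_mulmx => // i j; exact: FG.
Qed.

Lemma mu_hom a b t v : 0 <= t -> mu a b (t *: v) = t *: mu a b v.
Proof.
move=> t0; case: mu_polyptych => /(_ a b) [_ [Phi [[[Hp _] Hcov] H]]] _.
have [C hC Cv] := Hcov v; have [_ [B [hB HB]]] := H C hC.
by rewrite !HB ?scalemxAl //; exact: polycone_scale (Hp C hC) Cv t0.
Qed.

Lemma pinv_mu a b v : pinv mu b (mu a b v) = pinv mu a v.
Proof. by apply: functional_extensionality => c; rewrite /pinv mu_comp. Qed.

Lemma pinv_elems (m : I -> V) a : (forall a b, m b = mu a b (m a)) -> m = pinv mu a (m a).
Proof. by move=> h; apply: functional_extensionality => b; rewrite /pinv -h. Qed.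

Lemma elems_pinv (G : R -> Prop) : is_subring G -> (forall x, F x -> G x) ->
  forall a v, inFv G v -> elems G mu (pinv mu a v).
Proof.
move=> hG FG a v hv; split => [b c|b]; first by rewrite /pinv mu_comp.
exact: mu_inFv.
Qed.

Lemma addA_pinv a u v : Defs.addA mu a (pinv mu a u) (pinv mu a v) = pinv mu a (u + v).
Proof. by rewrite /Defs.addA /pinv !mu_id. Qed.

Lemma scaleA_pinv a l v : Defs.scaleA mu a l (pinv mu a v) = pinv mu a (l *: v).
Proof. by rewrite /Defs.scaleA /pinv !mu_id. Qed.

Lemma transport_full_cone a a0 (C : V -> Prop) : full_cone C ->
  (forall b x1 x2, C x1 -> C x2 -> mu a0 b (x1 + x2) = mu a0 b x1 + mu a0 b x2) ->
  full_cone (fun v => C (mu a a0 v)) /\ forall b v1 v2, C (mu a a0 v1) -> C (mu a a0 v2) ->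
    mu a b (v1 + v2) = mu a b v1 + mu a b v2.
Proof.
move=> [Cadd Cscale [y [rho [rp Cball]]]] Clin.
have mu_add v1 v2 : C (mu a a0 v1) -> C (mu a a0 v2) ->
    mu a a0 (v1 + v2) = mu a a0 v1 + mu a a0 v2.
  move=> h1 h2; have <- : mu a0 a (mu a a0 v1 + mu a a0 v2) = v1 + v2.
    by rewrite Clin // !mu_inv.
  by rewrite mu_inv.
split; last by move=> b v1 v2 h1 h2; rewrite -!(mu_comp a a0 b) -Clin // mu_add.
split => [v1 v2 h1 h2|v t h t0|]; first by rewrite mu_add //; exact: Cadd.
  by rewrite mu_hom //; exact: Cscale.
have [d dp Hd] := mu_cont a a0 (mu a0 a y) rp.
exists (mu a0 a y), d; split => // w hw; apply: Cball.
by have := Hd w hw; rewrite mu_inv.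
Qed.

End Polyptych.

Section Point.
Variables (R : realType) (r : nat) (I : finType) (F : R -> Prop).
Notation V := 'rV[R]_r.
Variables (mu : I -> I -> V -> V) (p : (I -> V) -> R).
Hypothesis F_subring : is_subring F.
Hypothesis mu_polyptych : is_polyptych F mu.
Hypothesis p_point : is_point F mu p.

Definition chartp a v := p (pinv mu a v).

(* The minimum in the definition of a point is attained, so there are charts. *)
Lemma chart_exists : exists z : I, True.
Proof.
have m0 : elems F mu (fun _ => 0).
  split => [a b|a]; last exact: inFv0.
  by rewrite -(scale0r 0) (mu_hom mu_polyptych) ?scale0r.
by case: p_point => _ [/(_ _ _ m0 m0) [[z _] _] _]; exists z.
Qed.

Lemma elems_pinvF a v : inFv F v -> elems F mu (pinv mu a v).
Proof. by move=> hv; exact (elems_pinv mu_polyptych F_subring (fun _ h => h) a hv). Qed.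

Lemma chartp_F a v : inFv F v -> F (chartp a v).
Proof. by case: p_point => h _ hv; apply/h/elems_pinvF. Qed.

Lemma chartp_super a u v : inFv F u -> inFv F v -> chartp a u + chartp a v <= chartp a (u + v).
Proof.
case: p_point => _ [h _] hu hv.
by have [_ /(_ a)] := h _ _ (elems_pinvF a hu) (elems_pinvF a hv); rewrite (addA_pinv mu_polyptych).
Qed.

Lemma chartp_hom a l v : F l -> 0 <= l -> inFv F v -> chartp a (l *: v) = l * chartp a v.
Proof.
case: p_point => _ [_ h] hl l0 hv.
by have := h l _ a hl l0 (elems_pinvF a hv); rewrite (scaleA_pinv mu_polyptych).
Qed.

Lemma chartp_mu a b v : chartp a (mu b a v) = chartp b v.
Proof. by rewrite /chartp (pinv_mu mu_polyptych). Qed.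

(* The minimum defining a point is attained at some chart [b]; if every
   mutation out of [a] is additive on [v1, v2], that value is [chartp a (v1 + v2)]. *)
Lemma chartp_additive a v1 v2 : inFv F v1 -> inFv F v2 ->
  (forall b, mu a b (v1 + v2) = mu a b v1 + mu a b v2) ->
  chartp a v1 + chartp a v2 = chartp a (v1 + v2).
Proof.
case: p_point => _ [h _] h1 h2 hl.
have [[b ->] _] := h _ _ (elems_pinvF a h1) (elems_pinvF a h2).
rewrite /chartp /Defs.addA /pinv; congr p; apply: functional_extensionality => c.
by rewrite -hl (mu_comp mu_polyptych).
Qed.

Local Notation ext z := (mcshane F (chartp z)).

Lemma ext_fracv z N w : (0 < N)%N -> inFv F w -> ext z (fracv N w) = chartp z w / N%:R.
Proof. by apply: mcshane_fracv => //; [exact: chartp_super | exact: chartp_hom]. Qed.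

Lemma ext_extends z w : inFv F w -> ext z w = chartp z w.
Proof. by apply: mcshane_extends => //; [exact: chartp_super | exact: chartp_hom]. Qed.

Lemma ext_cont_comp z (h : V -> V) : contV h -> forall x e, 0 < e ->
  exists2 d, 0 < d & forall y, near_v d x y -> `|ext z (h x) - ext z (h y)| < e.
Proof. by apply: mcshane_cont_comp => //; [exact: chartp_super | exact: chartp_hom]. Qed.

Lemma ext_mu_fracv a z N w : (0 < N)%N -> inFv F w ->
  ext z (mu a z (fracv N w)) = chartp a w / N%:R.
Proof.
move=> Np hw; have Nr : (0 : R) < N%:R by rewrite ltr0n.
rewrite /fracv (mu_hom mu_polyptych) ?invr_ge0 ?ltW // -/(fracv N _).
by rewrite ext_fracv ?chartp_mu //; apply: (mu_inFv mu_polyptych F_subring (fun _ h => h)).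
Qed.

Lemma ext_linear_on_cone z a (T : V -> Prop) c : full_cone T ->
  (forall v, inFv F v -> T v -> chartp a v = dotv c v) ->
  forall v, T v -> ext z (mu a z v) = dotv c v.
Proof.
move=> [Tadd Tscale [y [rho [rp Tball]]]] Hc v Tv.
apply: eq_near_cont (ext_cont_comp z (mu_cont mu_polyptych a z) v) (dotv_cont c v) _ => d dp.
have [N [w [Np hw Tw hnear]]] := cone_fracv_dense F_subring Tadd Tscale rp Tball Tv dp.
exists (fracv N w) => //; rewrite ext_mu_fracv // Hc //.
  by rewrite /fracv dotvZ mulrC.
have Nr : (0 : R) < N%:R by rewrite ltr0n.
rewrite -[w]scale1r -(mulfV (lt0r_neq0 Nr)) -scalerA.
exact: Tscale Tw (ltW Nr).
Qed.

Lemma chartp_linear_on_full_cone a (T : V -> Prop) : full_cone T ->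
  (forall b v1 v2, T v1 -> T v2 -> mu a b (v1 + v2) = mu a b v1 + mu a b v2) ->
  exists c, inFv F c /\ forall v, inFv F v -> T v -> chartp a v = dotv c v.
Proof.
move=> [Tadd Tscale [y [rho [rp Tball]]]] Tlin.
apply: (additive_on_cone_linear F_subring Tadd Tscale rp Tball (g := chartp a)).
- exact: chartp_F.
- exact: chartp_hom.
by move=> v1 v2 h1 h2 t1 t2; apply: chartp_additive => // b; exact: Tlin.
Qed.

Lemma linear_near_cone a0 (Phi : I -> list (V -> Prop)) (C0 : V -> Prop) x0
    (D : I -> V -> Prop) :
  (forall b, complete_fan (Phi b)) -> (forall b C, List.In C (Phi b) -> lin_on (mu a0 b) C) ->
  (forall b, List.In (D b) (Phi b)) -> (forall b x, C0 x -> D b x) -> C0 x0 ->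
  (forall c, C0 c -> exists2 s, 0 < s & C0 (x0 - s *: c)) ->
  forall a, exists c (T : V -> Prop), [/\ inFv F c, full_cone T,
    forall x, C0 x -> T (mu a0 a x),
    forall v, inFv F v -> T v -> chartp a v = dotv c v &
    forall z v, T v -> ext z (mu a z v) = dotv c v].
Proof.
move=> Hfan Hlin HD HC0 c0 relint a.
have [C [Cfull C0C Clin]] := fan_linear_full_cone Hfan Hlin HD HC0 c0 relint.
have [Tfull Tlin] := transport_full_cone mu_polyptych a Cfull Clin.
have [c [cF Hc]] := chartp_linear_on_full_cone Tfull Tlin.
exists c, (fun v => C (mu a a0 v)); split => // [x hx|z v hv].
  by rewrite (mu_inv mu_polyptych); apply: C0C.
exact: ext_linear_on_cone Tfull Hc v hv.
Qed.

Lemma chart_linear_on_Sigma a0 C0 : SigmaA mu a0 C0 -> forall a, exists c (T : V -> Prop),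
  [/\ inFv F c, forall x, C0 x -> T (mu a0 a x),
    forall v, inFv F v -> T v -> chartp a v = dotv c v &
    forall z v, T v -> ext z (mu a z v) = dotv c v].
Proof.
move=> [Phi [D [Hmin [HD HC]]]] a.
have Hfan b : complete_fan (Phi b) by have [] := Hmin b.
have Hlin b C : List.In C (Phi b) -> lin_on (mu a0 b) C by have [_ [h _]] := Hmin b; apply: h.
have [L HL] := polycone_bigcap (fun b => fan_polycone Hfan (HD b)).
have [x0 [hx0 relint]] := cone_relint_point L.
have C0L x : C0 x <-> cone_of L x by rewrite HC HL.
have relint' c : C0 c -> exists2 s, 0 < s & C0 (x0 - s *: c).
  by move=> /C0L /relint [s sp hs]; exists s => //; apply/C0L.
have HC0 b x : C0 x -> D b x by move=> /HC; apply.
have [c [T [cF _ h1 h2 h3]]] := linear_near_cone Hfan Hlin HD HC0 (proj2 (C0L x0) hx0) relint' a.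
by exists c, T.
Qed.

Lemma ext_locally_linear z x : exists c (T : V -> Prop),
  [/\ inFv F c, full_cone T, T x & forall v, T v -> ext z v = dotv c v].
Proof.
have [Phi HPhi] := functional_choice _ (mu_fan mu_polyptych z).
have Hfan b : complete_fan (Phi b) by have [] := HPhi b.
have Hlin b C : List.In C (Phi b) -> lin_on (mu z b) C by have [_ h] := HPhi b; apply: h.
have Hcov b : exists D, List.In D (Phi b) /\ D x.
  by have [_ /(_ x) [D hD Dx]] := Hfan b; exists D.
have [D HD] := functional_choice _ Hcov.
pose C0 v := exists2 t, 0 <= t & v = t *: x.
have HC0 b v : C0 v -> D b v.
  move=> [t t0 ->]; have [hD Dx] := HD b.
  exact: polycone_scale (fan_polycone Hfan hD) Dx t0.
have c0 : C0 x by exists 1; rewrite ?scale1r.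
have relint c : C0 c -> exists2 s, 0 < s & C0 (x - s *: c).
  move=> [t t0 ->]; have t1 : 0 < 1 + t by rewrite ltr_pwDl.
  exists (1 + t)^-1; first by rewrite invr_gt0.
  exists (1 + t)^-1; first by rewrite invr_ge0 ltW.
  rewrite scalerA -[X in X - _]scale1r -scalerBl; congr (_ *: _).
  by field; rewrite gt_eqF.
have [c [T [cF Tfull Tx _ HT]]] :=
  linear_near_cone Hfan Hlin (fun b => (HD b).1) HC0 c0 relint z.
exists c, T; split => //; first by have := Tx x c0; rewrite (mu_id mu_polyptych).
by move=> v hv; have := HT z v hv; rewrite (mu_id mu_polyptych).
Qed.

(* [q (m +_b m') - q m - q m'] for the extension [q m = ext z (m z)], read in chart [z]. *)
Definition trop_defect z b x x' :=
  ext z (mu b z (mu z b x + mu z b x')) - ext z x - ext z x'.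

Lemma trop_defect_cont z b x x' e : 0 < e -> exists2 d, 0 < d & forall y y',
  near_v d x y -> near_v d x' y' -> `|trop_defect z b x x' - trop_defect z b y y'| < e.
Proof.
move=> ep; have e3 : 0 < e / 3%:R by rewrite divr_gt0.
have mu_c := mu_cont mu_polyptych.
have [d1 d1p H1] := ext_cont_comp z (mu_c b z) (mu z b x + mu z b x') e3.
have d1h : 0 < d1 / 2 by rewrite divr_gt0.
have [d2 d2p H2] := mu_c z b x _ d1h.
have [d3 d3p H3] := mu_c z b x' _ d1h.
have [d4 d4p H4] := ext_cont_comp z (@contV_id _ _) x e3.
have [d5 d5p H5] := ext_cont_comp z (@contV_id _ _) x' e3.
exists (Num.min (Num.min d2 d3) (Num.min d4 d5)); first by rewrite !lt_min d2p d3p d4p d5p.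
move=> y y' hy hy'.
have hs := near_add (H2 y (near_minl (near_minl hy))) (H3 y' (near_minr (near_minl hy'))).
rewrite -splitr in hs.
have k1 := H1 _ hs; have k2 := H4 y (near_minl (near_minr hy)).
have k3 := H5 y' (near_minr (near_minr hy')).
rewrite /trop_defect.
set A := ext z (mu b z _) in k1 *; set A' := ext z (mu b z (_ + _)) in k1 *.
set B := ext z x in k2 *; set B' := ext z y in k2 *.
set C := ext z x' in k3 *; set C' := ext z y' in k3 *.
rewrite (_ : A - B - C - (A' - B' - C') = (A - A') - (B - B') - (C - C')); last by ring.
apply: le_lt_trans (ler_normB _ _) _; have := ler_normB (A - A') (B - B').
rewrite (_ : e = e / 3%:R + e / 3%:R + e / 3%:R); last by field.
lra.
Qed.

Lemma trop_defect_fracv z b N w w' : (0 < N)%N -> inFv F w -> inFv F w' ->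
  trop_defect z b (fracv N w) (fracv N w') =
  (chartp b (mu z b w + mu z b w') - chartp z w - chartp z w') / N%:R.
Proof.
move=> Np hw hw'; have Nr : (0 : R) < N%:R by rewrite ltr0n.
have muF a b' v : inFv F v -> inFv F (mu a b' v).
  by move=> hv; apply: (mu_inFv mu_polyptych F_subring (fun _ h => h)).
have hs : inFv F (mu z b w + mu z b w') by apply: inFvD => //; apply: muF.
rewrite /trop_defect /fracv !(mu_hom mu_polyptych) ?invr_ge0 ?ltW //.
rewrite -scalerDr (mu_hom mu_polyptych) ?invr_ge0 ?ltW // -!/(fracv N _).
rewrite !ext_fracv //; first by rewrite chartp_mu !mulrBl.
by apply: muF.
Qed.

Lemma trop_defect_fracv_min z N w w' : (0 < N)%N -> inFv F w -> inFv F w' ->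
  (forall b, 0 <= trop_defect z b (fracv N w) (fracv N w')) /\
  exists b, trop_defect z b (fracv N w) (fracv N w') = 0.
Proof.
move=> Np hw hw'; have Nr : (0 : R) < N%:R by rewrite ltr0n.
case: p_point => _ [h _]; have [[b hb] hle] := h _ _ (elems_pinvF z hw) (elems_pinvF z hw').
have E a : p (Defs.addA mu a (pinv mu z w) (pinv mu z w')) =
  chartp a (mu z a w + mu z a w') by [].
rewrite E in hb; split => [b'|]; last first.
  exists b; rewrite trop_defect_fracv // -hb /chartp.
  by rewrite [X in X / _](_ : _ = 0) ?mul0r //; ring.
rewrite trop_defect_fracv //; apply: divr_ge0; last exact: ltW.
by have := hle b'; rewrite E /chartp; lra.
Qed.

Lemma ext_tropical z x x' :
  (forall b, 0 <= trop_defect z b x x') /\ exists b, trop_defect z b x x' = 0.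
Proof.
have ge b : 0 <= trop_defect z b x x'.
  rewrite leNgt; apply/negP => hlt; rewrite -oppr_gt0 in hlt.
  have [d dp Hd] := trop_defect_cont z b x x' hlt.
  have [N [w [w' [Np hw hw' h1 h2]]]] := fracv_dense2 F_subring x x' dp.
  have := Hd _ _ h1 h2; have [/(_ b) k _] := trop_defect_fracv_min z Np hw hw'.
  have := ler_norm (trop_defect z b (fracv N w) (fracv N w') - trop_defect z b x x').
  rewrite distrC; lra.
split => //; apply: NNPP => hn.
have pos b : 0 < trop_defect z b x x'.
  by rewrite lt_neqAle ge andbT; apply/eqP => h; apply: hn; exists b.
have [d dp Hd] := common_radius_fin (P := fun b d => forall y y', near_v d x y ->
    near_v d x' y' -> `|trop_defect z b x x' - trop_defect z b y y'| < trop_defect z b x x')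
  (fun b e e' e'p h1 h2 y y' hy hy' => h2 y y' (near_mono h1 hy) (near_mono h1 hy'))
  (fun b => trop_defect_cont z b x x' (pos b)).
have [N [w [w' [Np hw hw' h1 h2]]]] := fracv_dense2 F_subring x x' dp.
have [_ [b hb]] := trop_defect_fracv_min z Np hw hw'.
by have := Hd b _ _ h1 h2; rewrite hb subr0 ger0_norm ?ge // ltxx.
Qed.

Lemma ext_point z (F' : R -> Prop) : is_subring F' -> (forall x, F x -> F' x) ->
  is_point F' mu (fun m => ext z (m z)).
Proof.
move=> hF' FF'; split => [m [_ hm]|]; last split.
- have [c [T [cF _ Tm HT]]] := ext_locally_linear z (m z).
  by rewrite HT //; apply: Fdot => // i; apply: FF'.
- move=> m m' [hm _] [hm' _].
  have E b : ext z (Defs.addA mu b m m' z) = ext z (m z) + ext z (m' z) + trop_defect z b (m z) (m' z).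
    by rewrite /trop_defect /Defs.addA /pinv (hm z b) (hm' z b); ring.
  have [ge [b hb]] := ext_tropical z (m z) (m' z).
  split; first by exists b; rewrite E hb addr0.
  by move=> b'; rewrite E lerDl.
move=> l m b hl l0 [hm _].
rewrite /Defs.scaleA /pinv (hm z b) (mu_hom mu_polyptych) // (mu_inv mu_polyptych).
have [c [T [cF [_ Tscale _] Tm HT]]] := ext_locally_linear z (m z).
by rewrite !HT ?dotvZ //; apply: Tscale.
Qed.

End Point.

Unset Implicit Arguments.

Theorem mainTheorem1 (R : realType) (r : nat) (I : finType) (F : R -> Prop)
  (mu : I -> I -> 'rV[R]_r -> 'rV[R]_r) (p : (I -> 'rV[R]_r) -> R) :
  is_subring F -> is_polyptych F mu -> is_point F mu p ->
  (forall a0 C0, SigmaA mu a0 C0 -> forall a, lin_on_cone F mu p a0 C0 a) /\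
  (forall F' : R -> Prop, is_subring F' -> (forall x, F x -> F' x) ->
     exists q : (I -> 'rV[R]_r) -> R,
       (forall m, elems F mu m -> q m = p m) /\
       (forall a, cont_on (inFv F') (fun v => q (pinv mu a v))) /\
       (forall a0 C0, SigmaA mu a0 C0 -> forall a, lin_on_cone F' mu q a0 C0 a) /\
       is_point F' mu q).
Proof.
move=> hF hmu hp; split.
  move=> a0 C0 hS a; have [c [T [cF C0T Hc _]]] := chart_linear_on_Sigma hF hmu hp hS a.
  by exists c; split => // v [x hx ->] hv; apply: Hc => //; apply: C0T.
move=> F' hF' FF'; have [z _] := chart_exists hF hmu hp.
exists (fun m => mcshane F (chartp mu p z) (m z)); split; last split; last split.
- move=> m [hm hmF]; rewrite ext_extends //.
  by rewrite /chartp -(pinv_elems z hm).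
- move=> a x _ e ep; have [d dp Hd] := ext_cont_comp hF hmu hp z (mu_cont hmu a z) x ep.
  by exists d => // y _; exact: Hd.
- move=> a0 C0 hS a; have [c [T [cF C0T _ Hc]]] := chart_linear_on_Sigma hF hmu hp hS a.
  exists c; split; first by move=> i; apply: FF'.
  by move=> v [x hx ->] _; apply: Hc; apply: C0T.
exact: ext_point.
Qed.
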